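(* Let $U$ be a uniformly convex Banach space satisfying Opial's condition, and let $Q\subseteq U$ be a closed, convex, bounded set. Let $r>0$ and let $\{\beta_n\}_n$ be a sequence of positive real numbers with $\lim_{n\to\infty}\beta_n=1$. Suppose $T:Q\to Q$ satisfies: for all $p,q\in Q$ with $\|p-q\|<r$, $\|T^np-T^nq\|\leq\beta_n\|p-q\|$ for every $n\in\mathbb{N}$. Let $\{q_n\}_n$ be a sequence in $Q$ converging weakly to some $w$ with $q_n-Tq_n\to 0$. If the asymptotic radius of $\{q_n\}_n$ relative to $Q$ is less than $r$, then $w$ is a fixed point of $T$.
   Context: Opial's condition (as defined in the paper): for every sequence $\{x_n\}_n$ in $U$ converging weakly to $x\in U$ and every $p\in U$ with $p\neq x$, one has $\limsup_{n\to\infty}\|x_n-x\|\leq\limsup_{n\to\infty}\|x_n-p\|$. For a bounded sequence $\{x_n\}_n$ in $U$, its asymptotic radius relative to $Q$ is $\inf_{y\in Q}\limsup_{n\to\infty}\|x_n-y\|$. *)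

From HB Require Import structures.
From mathcomp Require Import all_boot all_order all_algebra.
From mathcomp Require Import all_classical all_reals all_analysis.
Set Implicit Arguments. Unset Strict Implicit. Unset Printing Implicit Defensive.
Import Order.TTheory GRing.Theory Num.Theory.
Import numFieldNormedType.Exports.
Local Open Scope classical_set_scope.
Local Open Scope ring_scope.

Definition convex_subset {R : realType} {U : normedModType R} (Q : set U) :=
  forall x y (t : R), Q x -> Q y -> 0 <= t -> t <= 1 ->
    Q (t *: x + (1 - t) *: y).

Definition uniformly_convex {R : realType} (U : normedModType R) :=
  forall eps : R, 0 < eps -> eps <= 2 ->
    exists2 delta : R, 0 < delta &
      forall x y : U, `|x| <= 1 -> `|y| <= 1 -> eps <= `|x - y| ->
        `|(2^-1) *: (x + y)| <= 1 - delta.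

Definition weak_cvg {R : realType} {U : normedModType R} (x : nat -> U) (l : U) :=
  forall f : {linear U -> R^o}, continuous f -> (f \o x) @ \oo --> f l.

Definition opial {R : realType} (U : normedModType R) :=
  forall (x : nat -> U) (l p : U), weak_cvg x l -> p != l ->
    (limn_esup (fun n => (`|x n - l|)%:E) <= limn_esup (fun n => (`|x n - p|)%:E))%E.

Definition asymptotic_radius {R : realType} {U : normedModType R}
    (x : nat -> U) (Q : set U) : \bar R :=
  ereal_inf [set limn_esup (fun n => (`|x n - y|)%:E) | y in Q].

From HB Require Import structures.
From mathcomp Require Import all_boot all_order all_algebra.
From mathcomp Require Import all_classical all_reals all_analysis.
From mathcomp Require Import ring lra.
Import Order.TTheory GRing.Theory Num.Theory.
Import numFieldNormedType.Exports.
Local Open Scope classical_set_scope.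
Local Open Scope ring_scope.

(* First, [w] lies in [Q]. Otherwise Opial's condition keeps every term of a
   sequence of [Q] weakly converging to [w] away from infinitely many later
   ones, and uniform convexity turns the midpoints of such pairs into a new
   sequence of [Q], still weakly converging to [w], whose distance to [w] has
   shrunk by a fixed factor; iterating, [w] is in the closure of [Q].
   By Opial's condition, [w] minimizes [limsup ||q_n - y||]; call the minimum
   [rho < r]. If [rho = 0] then [q_n --> w]. Otherwise, as [q_n - T^m q_n --> 0],
   the point [T^m w] has asymptotic radius at most [beta_m rho], which tends to
   [rho], and uniform convexity forces [T^m w --> w]. In both cases [w] is the
   limit of points [a] of [Q] with [T a] also tending to [w], so [T w = w] by
   the Lipschitz bound for [T] near [w]. *)

Section limn_esup_real.
Context {R : realType}.
Implicit Types (a : nat -> R) (t : R).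

Lemma limn_esup_le_near a t :
  (\forall n \near \oo, a n <= t) -> (limn_esup (fun n => (a n)%:E) <= t%:E)%E.
Proof.
move=> a_le; rewrite /limn_esup limf_esupE.
apply: le_trans (ereal_inf_lbound _) _; first by exists [set n | a n <= t].
by apply: ge_ereal_sup => _ [n /= ant <-]; rewrite lee_fin.
Qed.

Lemma limn_esup_lt_near a t :
  (limn_esup (fun n => (a n)%:E) < t%:E)%E -> \forall n \near \oo, a n < t.
Proof.
rewrite /limn_esup limf_esupE => /ereal_inf_lt [_ [V FV <-]] sup_lt.
apply: filterS FV => n Vn; rewrite -lte_fin; apply: le_lt_trans sup_lt.
by apply: ereal_sup_ubound; exists n.
Qed.

Lemma lt_limn_esup_infinitely a t :
  (t%:E < limn_esup (fun n => (a n)%:E))%E ->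
  forall m, exists2 n, (m <= n)%N & t < a n.
Proof.
move=> t_lt m; apply: contrapT => none; move: t_lt; apply/negP; rewrite -leNgt.
apply: limn_esup_le_near; exists m => // n /= mn; rewrite leNgt.
by apply/negP => t_lt; apply: none; exists n.
Qed.

End limn_esup_real.

Section normed_space.
Context {R : realType} {U : normedModType R}.
Implicit Types (x : nat -> U) (a b c w : U).

Lemma cvg_of_limn_esup_le0 {x w} :
  (limn_esup (fun n => `|x n - w|%:E) <= 0%:E)%E -> x @ \oo --> w.
Proof.
move=> sup_le0; apply/cvgrPdistC_lt => e e_gt0.
by apply: limn_esup_lt_near; apply: le_lt_trans sup_le0 _; rewrite lte_fin.
Qed.

Lemma cvg0_norm_le_scale {V : normedModType R} {u : nat -> U} {v : nat -> V} (k : R) :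
  (\forall n \near \oo, `|u n| <= k * `|v n|) -> v @ \oo --> 0 -> u @ \oo --> 0.
Proof.
move=> u_le v0; apply/norm_cvg0P.
have kv0 : (fun n => `|k| * `|v n|) @ \oo --> (0 : R^o).
  by rewrite -(mulr0 `|k|); apply: cvgMl_tmp; apply/norm_cvg0P.
apply: (squeeze_cvgr _ (cvg_cst 0) kv0); apply: filterS u_le => n u_le.
by rewrite normr_ge0 /= (le_trans u_le) // ler_wpM2r // ler_norm.
Qed.

Lemma closed_mem_of_dist (Q : set U) w : closed Q ->
  (forall e, 0 < e -> exists2 y, Q y & `|w - y| < e) -> Q w.
Proof.
move=> cQ near_Q; rewrite ((closure_id Q).1 cQ) => B /nbhs_ballP [e e_gt0 eB].
have [y Qy wy] := near_Q e e_gt0; exists y; split => //.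
by apply: eB; rewrite -ball_normE.
Qed.

Lemma midpointxx a : 2^-1 *: (a + a) = a.
Proof. by rewrite -[a in a + a]scale1r -scalerDl scalerA mulVf ?pnatr_eq0 ?scale1r. Qed.

Lemma midpointBr a b c : 2^-1 *: (a + b) - c = 2^-1 *: ((a - c) + (b - c)).
Proof. by rewrite addrACA -opprD scalerBr midpointxx. Qed.

Lemma convex_subset_midpoint (Q : set U) a b :
  convex_subset Q -> Q a -> Q b -> Q (2^-1 *: (a + b)).
Proof.
move=> cQ Qa Qb; have half : (1 - 2^-1 : R) = 2^-1 by field.
rewrite scalerDr -[X in _ + X *: _]half; apply: cQ => //.
by rewrite invf_le1 ?ler1n.
Qed.

End normed_space.

Section weak_convergence.
Context {R : realType} {U : normedModType R}.
Implicit Types (x y : nat -> U) (a b : U).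

Lemma weak_cvgD x y a b : weak_cvg x a -> weak_cvg y b -> weak_cvg (x \+ y) (a + b).
Proof.
move=> xa yb f cf; rewrite linearD.
have -> : f \o (x \+ y) = (f \o x) \+ (f \o y) by apply/funext => n /=; rewrite linearD.
exact: cvgD (xa f cf) (yb f cf).
Qed.

Lemma weak_cvgZ (t : R) x a : weak_cvg x a -> weak_cvg (fun n => t *: x n) (t *: a).
Proof.
move=> xa f cf; rewrite linearZ.
have -> : f \o (fun n => t *: x n) = (fun n => t * f (x n)).
  by apply/funext => n /=; rewrite linearZ.
exact: cvgMl_tmp (xa f cf).
Qed.

Lemma weak_cvg_comp x a (phi : nat -> nat) :
  phi @ \oo --> \oo -> weak_cvg x a -> weak_cvg (x \o phi) a.
Proof. by move=> phi_oo xa f cf; apply: cvg_comp phi_oo (xa f cf). Qed.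

End weak_convergence.

Definition midpoint_gap {R : realType} (U : normedModType R) (eps delta : R) :=
  forall x y : U, `|x| <= 1 -> `|y| <= 1 -> eps <= `|x - y| ->
    `|2^-1 *: (x + y)| <= 1 - delta.

Section uniform_convexity.
Context {R : realType} {U : normedModType R}.
Implicit Types (a b c : U) (eps delta s : R).

Lemma uniformly_convex_gap_le {eps s} : uniformly_convex U ->
  0 < eps -> eps <= 2 -> 0 < s -> exists2 delta, 0 < delta <= s & midpoint_gap U eps delta.
Proof.
move=> uc eps_gt0 eps_le2 s_gt0; have [delta delta_gt0 gap] := uc eps eps_gt0 eps_le2.
exists (Num.min delta s); first by rewrite lt_min delta_gt0 s_gt0 ge_min lexx orbT.
move=> x y x1 y1 xy; apply: le_trans (gap x y x1 y1 xy) _.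
by rewrite lerB // ge_min lexx.
Qed.

Lemma dist_midpoint_le {eps delta s a b c} : midpoint_gap U eps delta -> 0 < s ->
  `|a - c| <= s -> `|b - c| <= s -> eps * s <= `|a - b| ->
  `|2^-1 *: (a + b) - c| <= (1 - delta) * s.
Proof.
move=> gap s_gt0 ac bc ab; have s_neq0 : s != 0 by rewrite gt_eqF.
have unit_ball v : `|v| <= s -> `|s^-1 *: v| <= 1.
  by move=> vs; rewrite normrZ gtr0_norm ?invr_gt0 // ler_pdivrMl // mulr1.
have -> : 2^-1 *: (a + b) - c = s *: (2^-1 *: (s^-1 *: (a - c) + s^-1 *: (b - c))).
  by rewrite midpointBr -scalerDr !scalerA mulrCA mulfV // mulr1.
rewrite normrZ gtr0_norm // mulrC ler_pM2r //; apply: gap; rewrite ?unit_ball //.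
rewrite -scalerBr opprB addrA subrK normrZ gtr0_norm ?invr_gt0 //.
by rewrite mulrC ler_pdivlMr.
Qed.

End uniform_convexity.

Definition weak_limit_in_ball {R : realType} {U : normedModType R}
    (Q : set U) (w : U) (s : R) :=
  exists x : nat -> U,
    [/\ forall n, Q (x n), weak_cvg x w & \forall n \near \oo, `|x n - w| <= s].

Section weak_limit_in_convex.
Context {R : realType} {U : normedModType R} {Q : set U} {w : U}.
Hypotheses (op : opial U) (cvQ : convex_subset Q).

Lemma weak_limit_in_ball_shrink d s : ~ Q w -> 0 < d < 2^-1 ->
  midpoint_gap U 2^-1 d -> 0 < s ->
  weak_limit_in_ball Q w s -> weak_limit_in_ball Q w ((1 - d) * s).
Proof.
move=> notQw /andP[d_gt0 d_lt] gap s_gt0 [x [Qx xw xs]].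
have [sup_lt|sup_ge] := ltP (limn_esup (fun n => `|x n - w|%:E)) ((1 - d) * s)%:E.
  exists x; split => //; have := limn_esup_lt_near _ _ sup_lt.
  by apply: filterS => n /ltW.
have far m : exists n, (m <= n)%N /\ s / 2 < `|x n - x m|.
  have xmw : x m != w by apply: contra_not_neq notQw => <-.
  have sup_far : ((s / 2)%:E < limn_esup (fun n => `|x n - x m|%:E))%E.
    by apply: lt_le_trans (le_trans sup_ge (op _ _ _ xw xmw)); rewrite lte_fin; nra.
  have [n mn] := lt_limn_esup_infinitely (fun n => `|x n - x m|) _ sup_far m.
  by exists n.
have /boolp.choice [g g_far] := far.
have g_oo : g @ \oo --> \oo.
  by apply/cvgnyPge => m; exists m => // n /= mn; apply: leq_trans mn (g_far n).1.
exists (fun n => 2^-1 *: (x (g n) + x n)); split.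
- by move=> n; apply: convex_subset_midpoint.
- by rewrite -[w]midpointxx; apply/weak_cvgZ/weak_cvgD => //; apply: weak_cvg_comp.
- case: xs => N _ xN; exists N => // n /= Nn.
  apply: (dist_midpoint_le gap s_gt0); first by apply: xN; apply: leq_trans Nn (g_far n).1.
    exact: xN.
  by rewrite mulrC ltW // (g_far n).2.
Qed.

Lemma weak_limit_mem_closed_convex {q : nat -> U} :
  uniformly_convex U -> closed Q -> bounded_set Q ->
  (forall n, Q (q n)) -> weak_cvg q w -> Q w.
Proof.
move=> uc cQ [M0 [_ QM0]] Qq qw; apply: contrapT => notQw.
have [d /andP[d_gt0 d_le] gap] : exists2 d, 0 < d <= 4^-1 & midpoint_gap U 2^-1 d.
  by apply: uniformly_convex_gap_le => //; lra.
have QM y : Q y -> `|y| <= M0 + 1 by apply: QM0; rewrite ltrDl.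
pose s := M0 + 1 + `|w| + 1.
have s_gt0 : 0 < s.
  by have := QM _ (Qq 0%N); have := normr_ge0 (q 0%N); have := normr_ge0 w; rewrite /s; lra.
have ball_k k : weak_limit_in_ball Q w ((1 - d) ^+ k * s).
  elim: k => [|k IHk].
    exists q; split => //; apply: nearW => n; rewrite expr0 mul1r.
    by apply: le_trans (ler_normB _ _) _; have := QM _ (Qq n); rewrite /s; lra.
  rewrite exprS -mulrA; apply: weak_limit_in_ball_shrink => //; first lra.
  by apply: mulr_gt0 => //; apply: exprn_gt0; lra.
apply: notQw; apply: closed_mem_of_dist => // e e_gt0.
have [|k _ k_small] := cvgr0_norm_lt _ (cvg_geometric s (_ : `|1 - d| < 1)) _ e_gt0.
  by rewrite ger0_norm; lra.
have [x [Qx _ [N _ xN]]] := ball_k k.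
exists (x N) => //; rewrite distrC; apply: le_lt_trans (xN N (leqnn N)) _.
by apply: le_lt_trans (ler_norm _) _; rewrite mulrC; exact: k_small k (leqnn k).
Qed.

End weak_limit_in_convex.

Section asymptotic_center.
Context {R : realType} {U : normedModType R}.
Hypothesis op : opial U.
Context {q : nat -> U} {w : U}.
Hypothesis qw : weak_cvg q w.

Lemma limn_esup_weak_limit_le_radius (Q : set U) :
  (limn_esup (fun n => `|q n - w|%:E) <= asymptotic_radius q Q)%E.
Proof.
apply: le_ereal_inf_tmp => _ [y _ <-].
by have [->|yw] := eqVneq y w; [exact: lexx | exact: op].
Qed.

(* Otherwise the midpoint of [z] and [w] would have a smaller asymptotic
   radius than [w], against Opial's condition. *)
Lemma near_asymptotic_center (rho eps : R) : uniformly_convex U ->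
  limn_esup (fun n => `|q n - w|%:E) = rho%:E -> 0 < rho -> 0 < eps ->
  exists2 k, 0 < k &
    forall z, (\forall n \near \oo, `|q n - z| <= rho + k) -> `|z - w| <= eps.
Proof.
move=> uc sup_rho rho_gt0 eps_gt0.
pose e := Num.min (eps / (2 * rho)) 2.
have e_gt0 : 0 < e by rewrite lt_min ltr0n andbT divr_gt0 ?mulr_gt0.
have e_le2 : e <= 2 by rewrite ge_min lexx orbT.
have [d /andP[d_gt0 d_le1] gap] := uniformly_convex_gap_le uc e_gt0 e_le2 ltr01.
exists (rho * d / 2); first by rewrite divr_gt0 ?mulr_gt0.
move=> z near_z; rewrite leNgt; apply/negP => far.
set s := rho + rho * d / 2.
have s_gt0 : 0 < s by rewrite /s; nra.
have near_w : \forall n \near \oo, `|q n - w| <= s.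
  have sup_lt : (limn_esup (fun n => `|q n - w|%:E) < s%:E)%E.
    by rewrite sup_rho lte_fin /s; nra.
  by have := limn_esup_lt_near _ _ sup_lt; apply: filterS => n /ltW.
have es : e * s <= `|w - z|.
  rewrite distrC; apply: le_trans (ltW far); apply: le_trans (_ : eps / (2 * rho) * s <= eps).
    by rewrite ler_pM2r // ge_min lexx.
  by rewrite mulrAC ler_pdivrMr ?mulr_gt0 // ler_pM2l // /s; nra.
have mid_w : 2^-1 *: (w + z) != w.
  apply/eqP => /eqP; rewrite -subr_eq0 midpointBr subrr add0r scaler_eq0 subr_eq0.
  by rewrite invr_eq0 pnatr_eq0 /= => /eqP zw; move: far; rewrite zw subrr normr0 ltNge ltW.
have sup_mid :
    (limn_esup (fun n => `|q n - 2^-1 *: (w + z)|%:E) <= ((1 - d) * s)%:E)%E.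
  apply: limn_esup_le_near; apply: filterS2 near_w near_z => n nw nz.
  by rewrite distrC; apply: (dist_midpoint_le gap s_gt0) => //; rewrite distrC.
have := le_trans (op _ _ _ qw mid_w) sup_mid; rewrite sup_rho lee_fin /s; nra.
Qed.

End asymptotic_center.

Definition iter_lipschitz_within {R : realType} {U : normedModType R}
    (Q : set U) (r : R) (beta : nat -> R) (T : U -> U) :=
  forall p x, Q p -> Q x -> `|p - x| < r ->
    forall n, (0 < n)%N -> `|iter n T p - iter n T x| <= beta n * `|p - x|.

Section iterates.
Context {R : realType} {U : normedModType R}.
Context {Q : set U} {r : R} {beta : nat -> R} {T : U -> U}.
Hypotheses (r_gt0 : 0 < r) (TQ : forall x, Q x -> Q (T x))
  (T_lip : iter_lipschitz_within Q r beta T).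

Lemma iter_mem m x : Q x -> Q (iter m T x).
Proof. by elim: m => //= m IHm Qx; apply/TQ/IHm. Qed.

Lemma iter_lipschitz_cvg0 m (a b : nat -> U) :
  (forall n, Q (a n)) -> (forall n, Q (b n)) -> (0 < m)%N ->
  (fun n => a n - b n) @ \oo --> 0 ->
  (fun n => iter m T (a n) - iter m T (b n)) @ \oo --> 0.
Proof.
move=> Qa Qb m_gt0 ab0; apply: (cvg0_norm_le_scale (beta m) _ ab0).
near=> n; apply: T_lip => //; near: n; exact: cvgr0_norm_lt.
Unshelve. all: by end_near. Qed.

Lemma fixed_point_of_cvg {a : nat -> U} {w} : Q w -> (forall n, Q (a n)) ->
  a @ \oo --> w -> (T \o a) @ \oo --> w -> T w = w.
Proof.
move=> Qw Qa aw Taw; have Ta_Tw : (T \o a) @ \oo --> T w.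
  apply/subr_cvg0; apply: (iter_lipschitz_cvg0 1) => //; exact/subr_cvg0.
exact: cvg_unique Ta_Tw Taw.
Qed.

Lemma cvg_sub_iter {q : nat -> U} : (forall n, Q (q n)) ->
  (fun n => q n - T (q n)) @ \oo --> 0 ->
  forall m, (fun n => q n - iter m T (q n)) @ \oo --> 0.
Proof.
move=> Qq qTq; elim=> [|m IHm].
  by under eq_fun do rewrite subrr; exact: cvg_cst.
have step : (fun n => iter m T (q n) - iter m T (T (q n))) @ \oo --> 0.
  case: m {IHm} => [//|m]; apply: iter_lipschitz_cvg0 => // n; exact: TQ.
have -> : (fun n => q n - iter m.+1 T (q n)) =
    (fun n => q n - iter m T (q n)) \+ (fun n => iter m T (q n) - iter m T (T (q n))).
  by apply/funext => n; rewrite /= addrA subrK -iterSr.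
by rewrite -[0]addr0; exact: cvgD.
Qed.

Lemma iter_cvg_weak_limit {q : nat -> U} {w rho} :
  uniformly_convex U -> opial U -> beta @ \oo --> (1 : R) ->
  Q w -> (forall n, Q (q n)) -> weak_cvg q w ->
  (fun n => q n - T (q n)) @ \oo --> 0 ->
  limn_esup (fun n => `|q n - w|%:E) = rho%:E -> 0 < rho < r ->
  (fun m => iter m T w) @ \oo --> w.
Proof.
move=> uc op beta1 Qw Qq qw qTq sup_rho /andP[rho_gt0 rho_lt_r].
apply/cvgrPdist_le => eps eps_gt0.
have [k k_gt0 center] := near_asymptotic_center op qw _ _ uc sup_rho rho_gt0 eps_gt0.
pose c := (rho + k / 2) / (rho + k / 4).
have c_gt1 : 1 < c by rewrite /c ltr_pdivlMr ?mul1r; lra.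
have near_w : \forall n \near \oo, `|q n - w| < Num.min r (rho + k / 4).
  by apply: limn_esup_lt_near; rewrite sup_rho lte_fin lt_min rho_lt_r /=; lra.
near=> m; rewrite distrC; apply: center.
have m_gt0 : (0 < m)%N by near: m; exists 1%N.
have beta_gt0 : 0 < beta m by near: m; exact: cvgr_gt beta1 _ ltr01.
have beta_lt : beta m < c by near: m; exact: cvgr_lt _ beta1 _ c_gt1.
have k4_gt0 : 0 < k / 4 by lra.
have near_qTm : \forall n \near \oo, `|q n - iter m T (q n)| < k / 4.
  exact: cvgr0_norm_lt _ (cvg_sub_iter Qq qTq m) _ k4_gt0.
apply: filterS2 near_w near_qTm => n; rewrite lt_min => /andP[qw_r qw_rho] qTm.
have lip := T_lip _ _ (Qq n) Qw qw_r _ m_gt0.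
have : beta m * `|q n - w| <= rho + k / 2.
  rewrite -[rho + k / 2](divfK (_ : rho + k / 4 != 0)); last by rewrite gt_eqF //; lra.
  by apply: ler_pM => //; apply: ltW.
have := ler_distD (iter m T (q n)) (q n) (iter m T w); lra.
Unshelve. all: by end_near. Qed.

End iterates.

Theorem mainTheorem4 (R : realType) (U : completeNormedModType R)
  (Q : set U) (r : R) (beta : nat -> R) (T : U -> U) (q : nat -> U) (w : U) :
  uniformly_convex U -> opial U ->
  closed Q -> convex_subset Q -> bounded_set Q ->
  0 < r ->
  (forall n, 0 < beta n) -> beta @ \oo --> (1 : R) ->
  (forall x, Q x -> Q (T x)) ->
  (forall p x, Q p -> Q x -> `|p - x| < r ->
     forall n, (0 < n)%N -> `|iter n T p - iter n T x| <= beta n * `|p - x|) ->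
  (forall n, Q (q n)) -> weak_cvg q w ->
  (fun n => q n - T (q n)) @ \oo --> (0 : U) ->
  (asymptotic_radius q Q < r%:E)%E ->
  T w = w.
Proof.
move=> uc op cQ cvQ bQ r_gt0 _ beta1 TQ T_lip Qq qw qTq radius_lt.
have Qw : Q w := weak_limit_mem_closed_convex op cvQ uc cQ bQ Qq qw.
set rho := limn_esup (fun n => `|q n - w|%:E).
have rho_lt : (rho < r%:E)%E := le_lt_trans (limn_esup_weak_limit_le_radius op qw Q) radius_lt.
have [rho_le0|rho_gt0] := leP rho 0%E.
  have qw_strong : q @ \oo --> w := cvg_of_limn_esup_le0 rho_le0.
  apply: (fixed_point_of_cvg r_gt0 T_lip Qw Qq qw_strong).
  have -> : T \o q = q \- (fun n => q n - T (q n)).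
    by apply/funext => n; rewrite /= opprB addrC subrK.
  by rewrite -[w]subr0; exact: cvgB.
have rho_fin : rho \is a fin_num.
  by rewrite ge0_fin_numE ?ltW // (lt_trans rho_lt) ?ltry.
have iter_w : (fun m => iter m T w) @ \oo --> w.
  apply: (iter_cvg_weak_limit r_gt0 TQ T_lip uc op beta1 Qw Qq qw qTq (esym (fineK rho_fin))).
  by rewrite -!lte_fin fineK // rho_gt0 rho_lt.
apply: (fixed_point_of_cvg r_gt0 T_lip Qw (fun m => iter_mem TQ m w Qw) iter_w).
by move: iter_w; rewrite -cvg_shiftS.
Qed.
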